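(* Let $\Sigma$ be an alphabet containing at least two letters and let $f\colon\Sigma^*\to\Sigma^*$ be RCP. Then the integer $p_f=|f(c)|-|f(\varepsilon)|$ does not depend on the letter $c\in\Sigma$, and for all $x\in\Sigma^*$ and all $a\in\Sigma$, $$|f(x)|=p_f|x|+|f(\varepsilon)|,\qquad |f(x)|_a=p_f|x|_a+|f(\varepsilon)|_a.$$
   Context: $\Sigma^*$ is the free monoid over $\Sigma$ (finite words, concatenation, empty word $\varepsilon$); $|u|$ is the length of $u$ and $|u|_a$ the number of occurrences of the letter $a$ in $u$. A function $f\colon(\Sigma^* )^k\to\Sigma^*$ is RCP if for every monoid morphism $\varphi\colon\Sigma^*\to\Sigma^*$ and all $u_1,\ldots,u_k,v_1,\ldots,v_k$ with $\varphi(u_i)=\varphi(v_i)$ for all $i$, we have $\varphi(f(u_1,\ldots,u_k))=\varphi(f(v_1,\ldots,v_k))$. *)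

From mathcomp Require Import all_boot all_order all_algebra.
Set Implicit Arguments. Unset Strict Implicit. Unset Printing Implicit Defensive.

Definition monoid_morphism (Sigma : Type) (phi : seq Sigma -> seq Sigma) : Prop :=
  phi [::] = [::] /\ forall u v : seq Sigma, phi (u ++ v) = phi u ++ phi v.

Definition RCP1 (Sigma : Type) (f : seq Sigma -> seq Sigma) : Prop :=
  forall phi : seq Sigma -> seq Sigma, monoid_morphism phi ->
  forall u v : seq Sigma, phi u = phi v -> phi (f u) = phi (f v).

(* For a set P of letters, the morphism sending letters of P to a fixed letter
   and erasing all others identifies exactly the words with the same number of
   P-letters; RCP then says that |f(x)|_P depends only on |x|_P.  With P = {a}
   this makes |f(x)|_a a function h_a of |x|_a alone.  With P = {a, b}, a <> b,
   comparing f(a^(i+1) b^j) and f(a^i b^(j+1)) gives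
   h_a(i+1) - h_a(i) = h_b(j+1) - h_b(j), so all the h_a are affine with one
   common slope p.  Summing over the letters gives the length formula. *)
From Pilot Require Import Defs.
From mathcomp Require Import all_boot all_order all_algebra.
From mathcomp Require Import zify.
Set Implicit Arguments. Unset Strict Implicit. Unset Printing Implicit Defensive.
Import GRing.Theory.
Local Open Scope ring_scope.

Section CollapseMorphism.
Variable Sigma : Type.

Definition collapse (P : pred Sigma) (a : Sigma) (s : seq Sigma) : seq Sigma :=
  flatten [seq if P x then [:: a] else [::] | x <- s].

Lemma collapse_morphism P a : Defs.monoid_morphism (collapse P a).
Proof. by split=> // u v; rewrite /collapse map_cat flatten_cat. Qed.

Lemma collapseE P a s : collapse P a s = nseq (count P s) a.
Proof.
by elim: s => //= x s IHs; rewrite /collapse /= -/(collapse P a s) IHs; case: (P x).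
Qed.

Lemma RCP1_count (f : seq Sigma -> seq Sigma) (P : pred Sigma) (a : Sigma) :
  RCP1 f -> forall u v, count P u = count P v -> count P (f u) = count P (f v).
Proof.
move=> rcpf u v eq_uv.
have := rcpf _ (collapse_morphism P a) u v.
by rewrite !collapseE eq_uv => /(_ erefl) /(congr1 size); rewrite !size_nseq.
Qed.

End CollapseMorphism.

Section RCP1Counts.
Variables (Sigma : eqType) (f : seq Sigma -> seq Sigma).
Hypothesis rcpf : RCP1 f.

Definition hcount (a : Sigma) (i : nat) : nat := count_mem a (f (nseq i a)).

Definition hslope (a : Sigma) : int := (hcount a 1)%:Z - (hcount a 0)%:Z.

Lemma count_mem_RCP1 a x : count_mem a (f x) = hcount a (count_mem a x).
Proof. by apply: (RCP1_count a rcpf); rewrite count_nseq /= eqxx mul1n. Qed.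

Lemma hcount_exchange a b i j : a != b ->
  (hcount a i.+1 + hcount b j = hcount a i + hcount b j.+1)%N.
Proof.
move=> neq_ab.
have count_ab k l : (count_mem a (nseq k a ++ nseq l b) = k)%N /\
                    (count_mem b (nseq k a ++ nseq l b) = l)%N.
  rewrite !count_cat !count_nseq /= !eqxx eq_sym (negbTE neq_ab).
  by rewrite !mul1n !mul0n addn0.
have count_predU s : count (predU (pred1 a) (pred1 b)) s
                     = (count_mem a s + count_mem b s)%N.
  rewrite -count_predUI (@eq_count _ (predI _ _) pred0) ?count_pred0 ?addn0 // => x /=.
  by apply/negP=> /andP[/eqP-> /eqP eq_xb]; rewrite eq_xb eqxx in neq_ab.
have := @RCP1_count _ f (predU (pred1 a) (pred1 b)) a rcpf
  (nseq i.+1 a ++ nseq j b) (nseq i a ++ nseq j.+1 b).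
rewrite !count_predU !(count_mem_RCP1 a) !(count_mem_RCP1 b).
have [-> ->] := count_ab i.+1 j; have [-> ->] := count_ab i j.+1.
by rewrite addSnnS; apply.
Qed.

Lemma hslope_eq a b : hslope a = hslope b.
Proof.
have [-> // | neq_ab] := eqVneq a b.
by have := hcount_exchange 0 0 neq_ab; rewrite /hslope; lia.
Qed.

Lemma hcount_affine a b i : a != b ->
  (hcount a i)%:Z = (hcount a 0)%:Z + i%:Z * hslope a.
Proof.
move=> neq_ab; elim: i => [|i IHi]; first by rewrite mul0r addr0.
have := hcount_exchange i 0 neq_ab.
by rewrite -addn1 PoszD mulrDl mul1r addrA -IHi (hslope_eq a b) /hslope; lia.
Qed.

Lemma count_mem_RCP1_affine a b x : a != b ->
  (count_mem a (f x))%:Z = hslope a * (count_mem a x)%:Z + (count_mem a (f [::]))%:Z.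
Proof.
move=> neq_ab.
by rewrite !count_mem_RCP1 /= (hcount_affine _ neq_ab) mulrC addrC.
Qed.

End RCP1Counts.

Lemma sum_count_mem (T : finType) (s : seq T) : (\sum_(a : T) count_mem a s)%N = size s.
Proof.
elim: s => [|x s IHs] /=; first by rewrite big1.
rewrite big_split /= IHs (bigD1 x) //= eqxx big1 ?addn0 ?add1n // => y /negbTE.
by rewrite eq_sym => ->.
Qed.

Theorem mainTheorem6 (Sigma : finType) (f : seq Sigma -> seq Sigma) :
  (1 < #|Sigma|)%N -> RCP1 f ->
  exists p : int,
    (forall c : Sigma, (size (f [:: c]))%:Z - (size (f [::]))%:Z = p) /\
    (forall x : seq Sigma,
        (size (f x))%:Z = p * (size x)%:Z + (size (f [::]))%:Z /\
        (forall a : Sigma,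
            (count_mem a (f x))%:Z = p * (count_mem a x)%:Z + (count_mem a (f [::]))%:Z)).
Proof.
move=> /card_gt1P[a0 [b0 [_ _ neq_a0b0]]] rcpf.
have count_affine x a : (count_mem a (f x))%:Z =
    hslope f a0 * (count_mem a x)%:Z + (count_mem a (f [::]))%:Z.
  have [b neq_ab] : exists b, a != b.
    by have [-> | neq_aa0] := eqVneq a a0; [exists b0 | exists a0].
  by rewrite (hslope_eq rcpf a0 a) (count_mem_RCP1_affine rcpf x neq_ab).
have size_affine x : (size (f x))%:Z =
    hslope f a0 * (size x)%:Z + (size (f [::]))%:Z.
  rewrite -!sum_count_mem -!natz !natr_sum mulr_sumr -big_split /=.
  by apply: eq_bigr => a _; rewrite !natz.
exists (hslope f a0); split=> [c | x]; last by [].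
by rewrite size_affine /= mulr1 addrK.
Qed.
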